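(* For every $N\ge3$, the given generators of $I_N$ form a regular sequence in $\mathbb C[k_1,\dots,k_N]$ and the given generators of $I'_N$ form a regular sequence in $\mathbb C[v_1,w_1,\dots,v_N,w_N]$; so the quotients are complete intersections.
   Context: Write $k_i=\begin{pmatrix}a_i&b_i\\c_i&d_i\end{pmatrix}$ ($4N$ variables), $Q_i=a_id_i-b_ic_i$, and let $v_i,w_i$ be $2$-component column vectors of variables ($4N$ variables). $I_N\subset\mathbb C[k_1,\dots,k_N]$ is generated by the four entries of $k_1+\dots+k_N$ and $Q_1,\dots,Q_N$; $I'_N\subset\mathbb C[v,w]$ is generated by the four entries of $v_1w_1^T+\dots+v_Nw_N^T$. *)

From HB Require Import structures.
From mathcomp Require Import all_boot all_order all_algebra.
From mathcomp Require Import reals.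
From mathcomp Require Import complex.
From mathcomp Require Import mpoly.
Set Implicit Arguments. Unset Strict Implicit. Unset Printing Implicit Defensive.
Import GRing.Theory.
Local Open Scope ring_scope.

Definition in_ideal_gen (n : nat) (K : comRingType) (s : seq {mpoly K[n]})
    (p : {mpoly K[n]}) : Prop :=
  exists c : seq {mpoly K[n]}, p = \sum_(i < size s) c`_i * s`_i.

Definition regular_seq (n : nat) (K : comRingType) (s : seq {mpoly K[n]}) : Prop :=
  ~ in_ideal_gen s 1 /\
  forall i : nat, (i < size s)%N -> forall g : {mpoly K[n]},
    in_ideal_gen (take i s) (g * s`_i) -> in_ideal_gen (take i s) g.

Definition var4 (K : comRingType) (N j : nat) : {mpoly K[4 * N]} :=
  match (4 * N)%N as m return {mpoly K[m]} with
  | 0 => 0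
  | m.+1 => 'X_(@inord m j)
  end.

(* Variables of C[k_1..k_N]: k_i = [[a_i,b_i],[c_i,d_i]] with (0-based i)
   a_i = X_(4i), b_i = X_(4i+1), c_i = X_(4i+2), d_i = X_(4i+3). *)
Definition ka K N i := var4 K N (4 * i).
Definition kb K N i := var4 K N (4 * i + 1).
Definition kc K N i := var4 K N (4 * i + 2).
Definition kd K N i := var4 K N (4 * i + 3).

(* Generators of I_N: the four entries (a,b,c,d order) of k_1+...+k_N,
   then Q_1, ..., Q_N with Q_i = a_i d_i - b_i c_i. *)
Definition IN_gens (K : comRingType) (N : nat) : seq {mpoly K[4 * N]} :=
  [:: \sum_(i < N) ka K N i; \sum_(i < N) kb K N i;
      \sum_(i < N) kc K N i; \sum_(i < N) kd K N i]
  ++ [seq ka K N i * kd K N i - kb K N i * kc K N i | i <- iota 0 N].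

(* Variables of C[v,w]: v_i = (X_(4i), X_(4i+1))^T, w_i = (X_(4i+2), X_(4i+3))^T. *)
Definition v1 K N i := var4 K N (4 * i).
Definition v2 K N i := var4 K N (4 * i + 1).
Definition w1 K N i := var4 K N (4 * i + 2).
Definition w2 K N i := var4 K N (4 * i + 3).

(* Generators of I'_N: the four entries ((1,1),(1,2),(2,1),(2,2)) of
   sum_i v_i w_i^T. *)
Definition IpN_gens (K : comRingType) (N : nat) : seq {mpoly K[4 * N]} :=
  [:: \sum_(i < N) v1 K N i * w1 K N i; \sum_(i < N) v1 K N i * w2 K N i;
      \sum_(i < N) v2 K N i * w1 K N i; \sum_(i < N) v2 K N i * w2 K N i].

From HB Require Import structures.
From mathcomp Require Import all_boot all_order all_algebra.
From mathcomp Require Import reals complex mpoly zify.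

(* The monomial order of mpoly compares total degrees first.  The substitution
   X_i := X_i * Y_i ^ w_i is an injective ring map (Y_i := 1 undoes it) under
   which total degree becomes the weighted degree with weights 1 + w_i, so it
   realises weighted leading monomials.  For suitable weights the leading
   monomials of the generators have pairwise disjoint supports, and nonzero
   polynomials f_0, ..., f_r with pairwise coprime leading monomials form a
   regular sequence.  Indeed, in a syzygy sum_k g_k f_k = 0 the largest
   leading monomial of the terms g_k f_k occurs at two indices i != j; by
   coprimality lm f_j divides lm g_i, and adding the Koszul syzygy
   h (f_i e_j - f_j e_i), with h the quotient of the leading terms, lowers the
   top of the syzygy without changing g_r modulo (f_0, ..., f_(r-1)).  By
   well-founded induction g_r lies in that ideal. *)

Set Implicit Arguments. Unset Strict Implicit. Unset Printing Implicit Defensive.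
Import Order.TTheory GRing.Theory.
Local Open Scope ring_scope.

Section Span.
Variable R : comPzRingType.
Implicit Types (f : nat -> R) (p q : R).

Definition in_span f r p : Prop := exists c : nat -> R, p = \sum_(k < r) c k * f k.

Lemma in_span0 f r : in_span f r 0.
Proof. by exists (fun=> 0); rewrite big1 // => k _; rewrite mul0r. Qed.

Lemma in_span_gen f r k a : (k < r)%N -> in_span f r (a * f k).
Proof.
move=> lt_kr; exists (fun l => (l == k)%:R * a).
rewrite (bigD1 (Ordinal lt_kr)) //= eqxx mul1r big1 ?addr0 // => l.
by rewrite -val_eqE /= => /negbTE ->; rewrite !mul0r.
Qed.

Lemma in_spanB f r p q : in_span f r p -> in_span f r q -> in_span f r (p - q).
Proof.
move=> [c ->] [d ->]; exists (fun k => c k - d k).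
by rewrite -sumrB; apply: eq_bigr => k _; rewrite mulrBl.
Qed.

Lemma eq_in_span f f' r p : f =1 f' -> in_span f r p -> in_span f' r p.
Proof. by move=> eq_f [c ->]; exists c; apply: eq_bigr => k _; rewrite eq_f. Qed.

End Span.

Lemma in_span_rmorph (R S : comPzRingType) (phi : {rmorphism R -> S}) f r p :
  in_span f r p -> in_span (phi \o f) r (phi p).
Proof.
move=> [c ->]; exists (phi \o c); rewrite rmorph_sum.
by apply: eq_bigr => k _; rewrite rmorphM.
Qed.

Lemma in_ideal_gen_take n (K : comNzRingType) (s : seq {mpoly K[n]}) i p :
  (i <= size s)%N -> in_ideal_gen (take i s) p <-> in_span (nth 0 s) i p.
Proof.
move=> le_is; have size_take_i : size (take i s) = i.
  by rewrite size_take_min; apply/minn_idPl.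
have sum_take (c : nat -> {mpoly K[n]}) :
    \sum_(k < size (take i s)) c k * (take i s)`_k = \sum_(k < i) c k * s`_k.
  rewrite -(big_mkord xpredT (fun k => c k * (take i s)`_k)) size_take_i big_mkord.
  by apply: eq_bigr => k _; rewrite nth_take.
split=> [[c ->]|[c ->]]; first by exists (nth 0 c); rewrite sum_take.
exists (mkseq c i); rewrite sum_take; apply: eq_bigr => k _.
by rewrite nth_mkseq.
Qed.

Lemma not_in_ideal_gen1 n (K : comNzRingType) (s : seq {mpoly K[n]}) :
  (forall k, (k < size s)%N -> (s`_k).@[fun=> 0] = 0) -> ~ in_ideal_gen s 1.
Proof.
move=> s_vanish [c /(congr1 (meval (fun=> 0)))]; rewrite meval1 rmorph_sum big1.
  by move/eqP; rewrite oner_eq0.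
by move=> k _; rewrite rmorphM /= s_vanish // mulr0.
Qed.

Definition coprime_mnm n (m1 m2 : 'X_{1..n}) : Prop :=
  forall v, (m1 v == 0%N) || (m2 v == 0%N).

Lemma coprime_mnm_le n (a b c d : 'X_{1..n}) :
  coprime_mnm b d -> (a + b = c + d)%MM -> (d <= a)%MM.
Proof.
move=> cop_bd /mnmP E; apply/mnm_lepP => v; move: (E v) (cop_bd v).
rewrite !mnmDE => /eqP; lia.
Qed.

Section LeadQuotient.
Variables (K : fieldType) (n : nat).
Implicit Types (p q s : {mpoly K[n]}).

Definition lead_quot p q : {mpoly K[n]} :=
  (mleadc p / mleadc q) *: 'X_[mlead p - mlead q].

Lemma lead_quot_neq0 p q : p != 0 -> q != 0 -> lead_quot p q != 0.
Proof.
move=> p0 q0; rewrite scaler_eq0 negb_or mulf_neq0 ?invr_eq0 ?mleadc_eq0 //=.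
by rewrite -mleadc_eq0 mleadXm mcoeffX eqxx oner_neq0.
Qed.

Lemma mlead_lead_quotM p q s : p != 0 -> q != 0 -> s != 0 ->
  mlead (lead_quot p q * s) = (mlead p - mlead q + mlead s)%MM.
Proof.
move=> p0 q0 s0; rewrite mleadM ?lead_quot_neq0 // mleadZ ?mleadXm //.
by rewrite mulf_neq0 ?invr_eq0 ?mleadc_eq0.
Qed.

Lemma mlead_sub_lead_quot p q : p != 0 -> q != 0 -> (mlead q <= mlead p)%MM ->
  p - lead_quot p q * q = 0 \/ (mlead (p - lead_quot p q * q) < mlead p)%O.
Proof.
move=> p0 q0 le_qp; set d := p - _.
have lead_hq : mlead (lead_quot p q * q) = mlead p by rewrite mlead_lead_quotM ?submK.
have [->|d0] := eqVneq d 0; [by left | right].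
have := mleadB_le p (lead_quot p q * q); rewrite lead_hq joinxx lt_neqAle => ->.
rewrite andbT; apply: contra d0 => /eqP lead_d; rewrite -mleadc_eq0 lead_d.
rewrite /d mcoeffB -{2}lead_hq mleadM ?lead_quot_neq0 // mleadcM mleadcZE.
by rewrite mleadXm mcoeffX eqxx mulr1 divfK ?subrr ?mleadc_eq0.
Qed.

End LeadQuotient.

Section CoprimeLeadSyzygy.
Variables (K : fieldType) (n r : nat) (f : nat -> {mpoly K[n]}).
Hypothesis f_neq0 : forall k : 'I_r.+1, f k != 0.
Hypothesis coprime_lead :
  forall i j : 'I_r.+1, i != j -> coprime_mnm (mlead (f i)) (mlead (f j)).
Implicit Types (p : {mpoly K[n]}) (g : nat -> {mpoly K[n]}) (M : 'X_{1..n}).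

Definition syzygy g : Prop := \sum_(k < r.+1) g k * f k = 0.
Definition lead_term g k : 'X_{1..n} := (mlead (g k) + mlead (f k))%MM.
Definition lead_bounded M g : Prop :=
  forall k : 'I_r.+1, g k != 0 -> (lead_term g k <= M)%O.
Definition lead_at M g : {set 'I_r.+1} :=
  [set k : 'I_r.+1 | (g k != 0) && (lead_term g k == M)].

Definition koszul p (i j k : nat) : {mpoly K[n]} :=
  if k == j then p * f i else if k == i then - (p * f j) else 0.

Lemma syzygyD_koszul g p (i j : 'I_r.+1) :
  i != j -> syzygy g -> syzygy (g \+ koszul p i j).
Proof.
move=> ij sg; rewrite /syzygy.
under eq_bigr do rewrite mulrDl.
rewrite big_split /= sg add0r (bigD1 j) // (bigD1 i) //= big1 => [|k /andP[kj ki]].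
  rewrite /koszul !eqxx (negbTE (ij : (i : nat) != j)) mulNr addr0.
  by rewrite mulrAC subrr.
by rewrite /koszul (negbTE (kj : (k : nat) != j)) (negbTE (ki : (k : nat) != i)) mul0r.
Qed.

Lemma koszul_last_in_span p (i j : 'I_r.+1) : i != j -> in_span f r (koszul p i j r).
Proof.
have lt_r (k l : 'I_r.+1) : k != l -> (r == l :> nat) -> (k < r)%N.
  move=> kl /eqP rl; rewrite ltn_neqAle -ltnS ltn_ord andbT.
  by apply: contra kl => /eqP kr; apply/eqP/val_inj; rewrite /= kr.
move=> ij; rewrite /koszul; case: ifP => [/(lt_r _ _ ij) ir|_].
  exact: in_span_gen.
case: ifP => [ri|_]; last exact: in_span0.
by rewrite -mulNr; apply: in_span_gen; apply: lt_r ri; rewrite eq_sym.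
Qed.

Lemma lead_at_other M g (i : 'I_r.+1) : syzygy g -> lead_bounded M g ->
  i \in lead_at M g -> exists2 j, j \in lead_at M g & j != i.
Proof.
move=> sg bM; rewrite inE => /andP[gi /eqP lead_i].
case: (pickP [pred j | (j \in lead_at M g) && (j != i)]) => [j /andP[]|none].
  by exists j.
have := congr1 (mcoeff M) sg; rewrite mcoeff0 raddf_sum (bigD1 i) //= big1 ?addr0.
  rewrite -lead_i mleadcM => /eqP; rewrite mulf_eq0 !mleadc_eq0.
  by rewrite (negbTE gi) (negbTE (f_neq0 i)).
move=> k ki; have [->|gk] := eqVneq (g k) 0; first by rewrite mul0r mcoeff0.
apply: mcoeff_gt_mlead; rewrite mleadM // -/(lead_term g k) lt_neqAle bM // andbT.
by apply: contraFN (none k) => /eqP Mk; rewrite /= inE gk Mk eqxx ki.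
Qed.

Lemma lead_bounded_lt M g : lead_bounded M g -> lead_at M g = set0 ->
  (forall k : 'I_r.+1, g k = 0) \/ exists2 M', (M' < M)%O & lead_bounded M' g.
Proof.
move=> bM T0.
have ltM (k : 'I_r.+1) : g k != 0 -> (lead_term g k < M)%O.
  move=> gk; rewrite lt_neqAle bM // andbT; apply/negP => /eqP Mk.
  by have := in_set0 k; rewrite -T0 inE gk Mk eqxx.
have [g0|] := boolP [forall k : 'I_r.+1, g k == 0]; first by left=> k; apply/eqP/(forallP g0).
rewrite negb_forall => /existsP[k0 gk0]; right.
exists (\join_(k < r.+1 | g k != 0) lead_term g k)%O; last first.
  by move=> k gk; apply: (joins_sup (P := fun k : 'I_r.+1 => g k != 0)).
apply: (big_ind (fun x => (x < M)%O)) => //.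
  exact: le_lt_trans (le0x _) (ltM _ gk0).
by move=> x y xM yM; rewrite ltUx xM yM.
Qed.

Lemma lead_at_reduce M g (i j : 'I_r.+1) :
  lead_bounded M g -> i \in lead_at M g -> j \in lead_at M g -> i != j ->
  exists h, lead_bounded M (g \+ koszul h i j) /\
            lead_at M (g \+ koszul h i j) \proper lead_at M g.
Proof.
move=> bM iM jM ij; move: (iM) (jM); rewrite !inE.
move=> /andP[gi /eqP lead_i] /andP[gj /eqP lead_j].
have lead_ij : (mlead (g i) + mlead (f i) = mlead (g j) + mlead (f j))%MM.
  by rewrite -[LHS]/(lead_term g i) -[RHS]/(lead_term g j) lead_i lead_j.
have le_fj_gi : (mlead (f j) <= mlead (g i))%MM.
  exact: coprime_mnm_le (coprime_lead ij) lead_ij.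
set h := lead_quot (g i) (f j); exists h; set g' := g \+ koszul h i j.
have ij_nat : (i : nat) != j by [].
have g'i : g' i = g i - h * f j by rewrite /g' /= /koszul (negbTE ij_nat) eqxx.
have g'j : g' j = g j + h * f i by rewrite /g' /= /koszul eqxx.
have g'k (k : 'I_r.+1) : k != i -> k != j -> g' k = g k.
  move=> ki kj; rewrite /g' /= /koszul.
  by rewrite (negbTE (kj : (k : nat) != j)) (negbTE (ki : (k : nat) != i)) addr0.
have lt_i : g' i != 0 -> (lead_term g' i < M)%O.
  rewrite /lead_term g'i -lead_i ltmc_add2l.
  by case: (mlead_sub_lead_quot gi (f_neq0 j) le_fj_gi) => [->|//]; rewrite eqxx.
have le_j : g' j != 0 -> (lead_term g' j <= M)%O.
  have lead_hfi : mlead (h * f i) = mlead (g j).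
    rewrite mlead_lead_quotM ?f_neq0 //; apply/mnmP => v.
    move/mnm_lepP: le_fj_gi => /(_ v); move/mnmP: lead_ij => /(_ v).
    rewrite !mnmDE mnmBE; lia.
  rewrite /lead_term g'j -lead_j lemc_add2l => _.
  by have := mleadD_le (g j) (h * f i); rewrite lead_hfi joinxx.
split=> [k|].
  have [->|ki] := eqVneq k i; first by move/lt_i/ltW.
  have [->|kj] := eqVneq k j; first exact: le_j.
  by rewrite /lead_term !g'k //; apply: bM.
apply/properP; split; last first.
  exists i => //; rewrite inE negb_and negbK.
  by have [//|/lt_i /lt_eqF ->] := eqVneq (g' i) 0.
apply/subsetP => k; rewrite !inE => /andP[g'k0 /eqP lead_k].
have [ki|ki] := eqVneq k i; first by move: (lt_i); rewrite -ki lead_k ltxx => /(_ g'k0).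
have [->|kj] := eqVneq k j; first by rewrite gj lead_j eqxx.
by move: g'k0 lead_k; rewrite /lead_term !g'k // => -> ->; rewrite eqxx.
Qed.

Lemma syzygy_last_in_span g : syzygy g -> in_span f r (g r).
Proof.
move=> sg; have [M bM] : exists M, lead_bounded M g.
  exists (\join_(k < r.+1 | g k != 0) lead_term g k)%O => k gk.
  exact: (joins_sup (P := fun k : 'I_r.+1 => g k != 0)).
elim/(@ltmwf n): M g sg bM => M IH_M g sg bM.
have empty_case g1 : syzygy g1 -> lead_bounded M g1 -> lead_at M g1 = set0 ->
    in_span f r (g1 r).
  move=> sg1 bM1 /(lead_bounded_lt bM1) [g0|[M' lt_M' bM']].
    by have -> : g1 r = 0 := g0 ord_max; apply: in_span0.
  exact: IH_M lt_M' g1 sg1 bM'.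
move: {2}#|lead_at M g| (leqnn #|lead_at M g|) => c.
elim: c g sg bM => [|c IH_c] g sg bM le_card.
  by apply: empty_case => //; apply/eqP; rewrite -cards_eq0 -leqn0.
have [|[i iM]] := set_0Vmem (lead_at M g); first exact: empty_case.
have [j jM ji] := lead_at_other sg bM iM.
have ij : i != j by rewrite eq_sym.
have [h [bM' lt_at]] := lead_at_reduce bM iM jM ij.
have in_g' : in_span f r ((g \+ koszul h i j) r).
  apply: IH_c (syzygyD_koszul h ij sg) bM' _.
  by rewrite -ltnS; apply: leq_trans le_card; apply: proper_card.
have -> : g r = (g \+ koszul h i j) r - koszul h i j r by rewrite /= addrK.
exact: in_spanB in_g' (koszul_last_in_span h ij).
Qed.

Lemma coprime_lead_mul_in_span p : in_span f r (p * f r) -> in_span f r p.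
Proof.
move=> [c pfr]; pose G k := if k == r then p else - c k.
have sG : syzygy G.
  rewrite /syzygy big_ord_recr /= /G eqxx pfr.
  under eq_bigr => k _ do rewrite (ltn_eqF (ltn_ord k)) mulNr.
  by rewrite sumrN addNr.
by have := syzygy_last_in_span sG; rewrite /G eqxx.
Qed.

End CoprimeLeadSyzygy.

Section LeadMonomialSum.
Variables (K : fieldType) (n : nat).
Implicit Types (A B : 'X_{1..n}) (p q : {mpoly K[n]}).

Definition has_mlead p A : Prop := p != 0 /\ mlead p = A.

Lemma has_mlead_XD A q : (msize q <= mdeg A)%N -> has_mlead ('X_[A] + q) A.
Proof.
move=> le_qA; have qA : q@_A = 0 by apply/memN_msupp_eq0/msize_mdeg_ge.
split.
  apply: contra_neq (@oner_neq0 K) => /(congr1 (mcoeff A)).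
  by rewrite mcoeffD mcoeffX eqxx qA addr0 mcoeff0.
have [->|q0] := eqVneq q 0; first by rewrite addr0 mleadXm.
rewrite mleadDl mleadXm //; apply: lt_mdeg_ltmc.
by rewrite -ltnS mlead_deg.
Qed.

Lemma has_mlead_XB A B : (mdeg B < mdeg A)%N -> has_mlead ('X_[A] - 'X_[B]) A.
Proof. by move=> lt_BA; apply: has_mlead_XD; rewrite msizeN msizeX. Qed.

Lemma has_mleadN p A : has_mlead p A -> has_mlead (- p) A.
Proof. by rewrite /has_mlead oppr_eq0 mleadN. Qed.

Lemma has_mlead_sumX (I : finType) (M : I -> 'X_{1..n}) (i0 : I) :
  (forall i, i != i0 -> (mdeg (M i) < mdeg (M i0))%N) ->
  has_mlead (\sum_i 'X_[M i]) (M i0).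
Proof.
move=> lt_M; rewrite (bigD1 i0) //=; apply: has_mlead_XD.
apply: leq_trans (msize_sum _ _ _) _; apply/bigmax_leqP => i /lt_M.
by rewrite msizeX.
Qed.

End LeadMonomialSum.

Section RegularTransfer.
Variables (K : fieldType) (n m : nat).
Variable psi : {rmorphism {mpoly K[n]} -> {mpoly K[m]}}.
Variable eps : {rmorphism {mpoly K[m]} -> {mpoly K[n]}}.
Hypothesis psiK : cancel psi eps.

Lemma regular_seq_coprime_lead (s : seq {mpoly K[n]}) (L : nat -> 'X_{1..m}) :
  ~ in_ideal_gen s 1 ->
  (forall k, (k < size s)%N -> has_mlead (psi s`_k) (L k)) ->
  (forall k l, (k < size s)%N -> (l < size s)%N -> k != l -> coprime_mnm (L k) (L l)) ->
  regular_seq s.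
Proof.
move=> s_proper s_lead L_coprime; split=> // i lt_is p.
have lt_s (k : 'I_i.+1) : (k < size s)%N by apply: leq_ltn_trans lt_is; rewrite -ltnS.
have le_is := ltnW lt_is.
move=> /(in_ideal_gen_take _ le_is) /(in_span_rmorph psi); rewrite rmorphM => psi_ps.
apply/(in_ideal_gen_take _ le_is).
have /(in_span_rmorph eps) : in_span (psi \o nth 0 s) i (psi p).
  apply: (coprime_lead_mul_in_span (f := psi \o nth 0 s)) psi_ps => [k|k l kl].
    by case: (s_lead k (lt_s k)).
  by case: (s_lead k (lt_s k)) => _ ->; case: (s_lead l (lt_s l)) => _ ->; apply: L_coprime.
by rewrite /= psiK; apply: eq_in_span => k; rewrite /= psiK.
Qed.

End RegularTransfer.


Lemma split_lshift m k (i : 'I_m) : split (lshift k i) = inl i.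
Proof. exact: (unsplitK (inl _ i)). Qed.

Lemma split_rshift m k (i : 'I_k) : split (rshift m i) = inr i.
Proof. exact: (unsplitK (inr _ i)). Qed.

Section WeightedSubstitution.
Variables (K : fieldType) (n : nat) (W : nat -> nat).

Definition wsubst : n.-tuple {mpoly K[n + n]} :=
  [tuple 'X_(lshift n i) * 'X_(rshift n i) ^+ W i | i < n].

Definition wsubst_inv : (n + n).-tuple {mpoly K[n]} :=
  [tuple if split j is inl i then 'X_i else 1 | j < n + n].

Definition base_index (v : 'I_(n + n)) : nat :=
  match split v with inl i => i | inr i => i end.

Definition wsubst_mnm (j : nat) : 'X_{1..n + n} :=
  [multinom if base_index v == j then (if split v is inl _ then 1 else W j) else 0
  | v < n + n].

Lemma wsubstK : cancel (comp_mpoly wsubst) (comp_mpoly wsubst_inv).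
Proof.
move=> p; rewrite [RHS]mpolyE (comp_mpolyE p wsubst) raddf_sum.
apply: eq_bigr => m _ /=.
rewrite comp_mpolyZ rmorph_prod mpolyXE_id; congr (_ *: _).
apply: eq_bigr => i _; rewrite rmorphXn tnth_mktuple rmorphM rmorphXn /=.
by rewrite !comp_mpolyXU -!tnth_nth !tnth_mktuple split_lshift split_rshift expr1n mulr1.
Qed.

Lemma wsubstX (j : 'I_n) : 'X_j \mPo wsubst = 'X_[wsubst_mnm j].
Proof.
rewrite comp_mpolyXU -tnth_nth tnth_mktuple mpolyXn -mpolyXD; congr mpolyX.
apply/mnmP => v; rewrite mnmDE mulmnE !mnm1E mnmE /base_index -(splitK v).
case: (split v) => a /=; rewrite ?split_lshift ?split_rshift.
  rewrite eq_lshift eq_rlshift addn0 eq_sym.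
  by have [->|aj] := eqVneq a j; rewrite ?eqxx // (negbTE (aj : (a : nat) != j)).
rewrite eq_lrshift eq_rshift add0n eq_sym.
by have [->|aj] := eqVneq a j; rewrite ?eqxx ?mul1n // (negbTE (aj : (a : nat) != j)).
Qed.

Lemma mdeg_wsubst_mnm (j : nat) : (j < n)%N -> mdeg (wsubst_mnm j) = (W j).+1.
Proof.
move=> lt_jn; rewrite mdegE big_split_ord /= -add1n.
congr addn; rewrite (bigD1 (Ordinal lt_jn)) //= big1 ?addn0 => [|a];
  rewrite mnmE /base_index ?split_lshift ?split_rshift /= ?eqxx //;
  by move=> aj; rewrite ifF //; apply: contraNF aj => /eqP aj; apply/eqP/val_inj.
Qed.

Lemma coprime_wsubst_mnm_sum (S1 S2 : seq nat) : ~~ has (mem S2) S1 ->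
  coprime_mnm (\big[+%MM/0%MM]_(x <- S1) wsubst_mnm x) (\big[+%MM/0%MM]_(x <- S2) wsubst_mnm x).
Proof.
have supp S v : (\big[+%MM/0%MM]_(x <- S) wsubst_mnm x) v != 0%N -> base_index v \in S.
  elim: S => [|x S IH]; first by rewrite big_nil mnm0E.
  rewrite big_cons mnmDE inE; have [//|bx] := eqVneq (base_index v) x.
  by rewrite mnmE (negbTE bx) add0n => /IH ->; rewrite orbT.
move=> S12 v; apply/negPn/negP => /norP[/supp v1 /supp v2].
by move/hasP: S12; apply; exists (base_index v).
Qed.

End WeightedSubstitution.

Lemma meval0_var4 (K : comNzRingType) N j : (var4 K N j).@[fun=> 0] = 0.
Proof. by rewrite /var4; case: (4 * N)%N => [|m]; rewrite ?meval0 ?mevalXU. Qed.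

Section BlockWeights.
Variables (K : fieldType) (N : nat) (wt : nat -> nat -> nat).
Local Notation n := (4 * N)%N.

Definition block_weight (j : nat) : nat := wt (j %/ 4) (j %% 4).

Local Notation psi p := (p \mPo wsubst K n block_weight).
Local Notation wm := (wsubst_mnm n block_weight).

Lemma var4E j (lt_jn : (j < n)%N) : var4 K N j = 'X_(Ordinal lt_jn).
Proof.
rewrite /var4; move: n lt_jn => [//|m] lt_jm.
by rewrite (_ : inord j = Ordinal lt_jm) //; apply: val_inj; rewrite /= inordK.
Qed.

Lemma block_lt i t : (i < N)%N -> (t < 4)%N -> (4 * i + t < n)%N.
Proof. lia. Qed.

Lemma block_weightE i t : (t < 4)%N -> block_weight (4 * i + t) = wt i t.
Proof.
move=> lt_t4; rewrite /block_weight mulnC divnMDl // modnMDl.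
by rewrite divn_small // addn0 modn_small.
Qed.

Lemma wsubst_var j : (j < n)%N -> psi (var4 K N j) = 'X_[wm j].
Proof. by move=> lt_jn; rewrite (var4E lt_jn) wsubstX. Qed.

Lemma mdeg_wsubst_mnm_block i t :
  (i < N)%N -> (t < 4)%N -> mdeg (wm (4 * i + t)) = (wt i t).+1.
Proof. by move=> lt_iN lt_t4; rewrite mdeg_wsubst_mnm ?block_lt // block_weightE. Qed.

Lemma has_mlead_block_sum t (i0 : 'I_N) : (t < 4)%N ->
  (forall i : 'I_N, i != i0 -> (wt i t < wt i0 t)%N) ->
  has_mlead (psi (\sum_(i < N) var4 K N (4 * i + t))) (wm (4 * i0 + t)).
Proof.
move=> lt_t4 lt_wt; rewrite rmorph_sum.
under eq_bigr => i _ do rewrite /= wsubst_var ?block_lt //.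
apply: has_mlead_sumX => i /lt_wt.
by rewrite !mdeg_wsubst_mnm_block.
Qed.

Lemma has_mlead_block_sum_mul t1 t2 (i0 : 'I_N) : (t1 < 4)%N -> (t2 < 4)%N ->
  (forall i : 'I_N, i != i0 -> (wt i t1 + wt i t2 < wt i0 t1 + wt i0 t2)%N) ->
  has_mlead (psi (\sum_(i < N) var4 K N (4 * i + t1) * var4 K N (4 * i + t2)))
    (wm (4 * i0 + t1) + wm (4 * i0 + t2)).
Proof.
move=> lt_t1 lt_t2 lt_wt; rewrite rmorph_sum.
under eq_bigr => i _ do rewrite rmorphM /= !wsubst_var ?block_lt // -mpolyXD.
apply: has_mlead_sumX => i /lt_wt.
by rewrite !mdegD !mdeg_wsubst_mnm_block // !addSn !addnS !ltnS.
Qed.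

Lemma has_mlead_block_binom i t1 t2 t3 t4 : (i < N)%N ->
  (t1 < 4)%N -> (t2 < 4)%N -> (t3 < 4)%N -> (t4 < 4)%N ->
  (wt i t3 + wt i t4 < wt i t1 + wt i t2)%N ->
  has_mlead (psi (var4 K N (4 * i + t1) * var4 K N (4 * i + t2) -
                  var4 K N (4 * i + t3) * var4 K N (4 * i + t4)))
    (wm (4 * i + t1) + wm (4 * i + t2)).
Proof.
move=> lt_iN lt_t1 lt_t2 lt_t3 lt_t4 lt_wt.
rewrite rmorphB !rmorphM /= !wsubst_var ?block_lt // -!mpolyXD.
by apply: has_mlead_XB; rewrite !mdegD !mdeg_wsubst_mnm_block // !addSn !addnS !ltnS.
Qed.

End BlockWeights.

(* Under these weights the leading monomials of the generators are
   a_0, b_2, c_2, d_1, b_0 c_0, b_1 c_1 and a_i d_i (i >= 2), whose variables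
   IN_lead_vars lists; they are pairwise coprime. *)
Definition IN_weight (i t : nat) : nat :=
  match i with
  | 0 => nth 0 [:: 10; 6; 6; 0] t
  | 1 => nth 0 [:: 0; 6; 6; 10] t
  | 2 => nth 0 [:: 8; 7; 7; 8] t
  | _ => t == 0
  end.

Definition IN_lead_vars (k : nat) : seq nat :=
  match k with
  | 0 => [:: 0] | 1 => [:: 9] | 2 => [:: 10] | 3 => [:: 7]
  | 4 => [:: 1; 2] | 5 => [:: 5; 6] | 6 => [:: 8; 11]
  | i.+4 => [:: 4 * i; 4 * i + 3]
  end.

Definition IN_lead_owner (x : nat) : nat :=
  if x == 0 then 0 else if x == 9 then 1 else if x == 10 then 2
  else if x == 7 then 3 else (4 + x %/ 4)%N.

Lemma IN_lead_ownerP k x : x \in IN_lead_vars k -> IN_lead_owner x = k.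
Proof.
case: k => [|[|[|[|[|[|[|k]]]]]]] /=; rewrite ?inE;
  try by [move=> /eqP -> | move=> /orP [/eqP ->|/eqP ->]].
move=> /orP [/eqP ->|/eqP ->]; rewrite /IN_lead_owner !ifN_eq; lia.
Qed.

Section IN.
Variables (K : fieldType) (N : nat).
Hypothesis N_ge3 : (3 <= N)%N.
Local Notation psi p := (p \mPo wsubst K (4 * N) (block_weight IN_weight)).
Local Notation wm := (wsubst_mnm (4 * N) (block_weight IN_weight)).

Lemma size_IN_gens : size (IN_gens K N) = (4 + N)%N.
Proof. by rewrite size_cat size_map size_iota. Qed.

Lemma IN_gens_vanish0 k : (k < size (IN_gens K N))%N ->
  ((IN_gens K N)`_k).@[fun=> 0] = 0.
Proof.
rewrite size_IN_gens; case: k => [|[|[|[|j]]]] lt_k;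
  try by rewrite /= rmorph_sum big1 // => i _; apply: meval0_var4.
rewrite /= (nth_map 0%N) ?size_iota; last lia.
by rewrite rmorphB !rmorphM /= !meval0_var4 mul0r subrr.
Qed.

Lemma has_mlead_IN_gens k : (k < size (IN_gens K N))%N ->
  has_mlead (psi (IN_gens K N)`_k) (\sum_(x <- IN_lead_vars k) wm x)%MM.
Proof.
have [N0 N1 N2] : [/\ 0 < N, 1 < N & 2 < N]%N by split; lia.
have ka0 i : ka K N i = var4 K N (4 * i + 0) by rewrite addn0.
rewrite size_IN_gens; case: k => [|[|[|[|j]]]] lt_k.
- rewrite /= big_seq1; under eq_bigr do rewrite ka0.
  by apply: (has_mlead_block_sum K (i0 := Ordinal N0)) => // -[[|[|[|i]]] ?].
- rewrite /= big_seq1.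
  by apply: (has_mlead_block_sum K (i0 := Ordinal N2)) => // -[[|[|[|i]]] ?].
- rewrite /= big_seq1.
  by apply: (has_mlead_block_sum K (i0 := Ordinal N2)) => // -[[|[|[|i]]] ?].
- rewrite /= big_seq1.
  by apply: (has_mlead_block_sum K (i0 := Ordinal N1)) => // -[[|[|[|i]]] ?].
have lt_jN : (j < N)%N by lia.
rewrite /= (nth_map 0%N) ?size_iota // nth_iota // add0n ka0.
case: j lt_jN {lt_k} => [|[|[|j]]] lt_jN; rewrite /= big_cons big_seq1.
- by rewrite -opprB rmorphN; apply/has_mleadN/has_mlead_block_binom.
- by rewrite -opprB rmorphN; apply/has_mleadN/has_mlead_block_binom.
- exact: has_mlead_block_binom.
- by rewrite -[X in wm X]addn0; apply: has_mlead_block_binom.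
Qed.

Lemma regular_seq_IN_gens : regular_seq (IN_gens K N).
Proof.
apply: (regular_seq_coprime_lead (@wsubstK K (4 * N) (block_weight IN_weight))
          (L := fun k => (\sum_(x <- IN_lead_vars k) wm x)%MM)).
- exact/not_in_ideal_gen1/IN_gens_vanish0.
- exact: has_mlead_IN_gens.
move=> k l _ _ kl; apply: coprime_wsubst_mnm_sum; apply/hasPn => x xk.
by apply: contraNN kl => xl; rewrite -(IN_lead_ownerP xk) -(IN_lead_ownerP xl).
Qed.

End IN.

(* Under these weights the leading monomials of the four generators are
   v1_0 w1_0, v1_1 w2_1, v2_2 w1_2 and v2_0 w2_0. *)
Definition IpN_weight (i t : nat) : nat :=
  match i with
  | 0 => 2
  | 1 => nth 0 [:: 3; 0; 0; 3] t
  | 2 => nth 0 [:: 0; 3; 3; 0] t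
  | _ => 0
  end.

Definition IpN_lead_vars (k : nat) : seq nat :=
  match k with 0 => [:: 0; 2] | 1 => [:: 4; 7] | 2 => [:: 9; 10] | _ => [:: 1; 3] end.

Section IpN.
Variables (K : fieldType) (N : nat).
Hypothesis N_ge3 : (3 <= N)%N.
Local Notation psi p := (p \mPo wsubst K (4 * N) (block_weight IpN_weight)).
Local Notation wm := (wsubst_mnm (4 * N) (block_weight IpN_weight)).

Lemma IpN_gens_vanish0 k : (k < size (IpN_gens K N))%N ->
  ((IpN_gens K N)`_k).@[fun=> 0] = 0.
Proof.
case: k => [|[|[|[|//]]]] _; rewrite /= rmorph_sum big1 // => i _;
  by rewrite rmorphM /= meval0_var4 mul0r.
Qed.

Lemma has_mlead_IpN_gens k : (k < size (IpN_gens K N))%N ->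
  has_mlead (psi (IpN_gens K N)`_k) (\sum_(x <- IpN_lead_vars k) wm x)%MM.
Proof.
have [N0 N1 N2] : [/\ 0 < N, 1 < N & 2 < N]%N by split; lia.
have v10 i : v1 K N i = var4 K N (4 * i + 0) by rewrite addn0.
case: k => [|[|[|[|//]]]] _; rewrite /= big_cons big_seq1.
- under eq_bigr do rewrite v10.
  by apply: (has_mlead_block_sum_mul K (i0 := Ordinal N0)) => // -[[|[|[|i]]] ?].
- under eq_bigr do rewrite v10.
  by apply: (has_mlead_block_sum_mul K (i0 := Ordinal N1)) => // -[[|[|[|i]]] ?].
- by apply: (has_mlead_block_sum_mul K (i0 := Ordinal N2)) => // -[[|[|[|i]]] ?].
- by apply: (has_mlead_block_sum_mul K (i0 := Ordinal N0)) => // -[[|[|[|i]]] ?].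
Qed.

Lemma regular_seq_IpN_gens : regular_seq (IpN_gens K N).
Proof.
apply: (regular_seq_coprime_lead (@wsubstK K (4 * N) (block_weight IpN_weight))
          (L := fun k => (\sum_(x <- IpN_lead_vars k) wm x)%MM)).
- exact/not_in_ideal_gen1/IpN_gens_vanish0.
- exact: has_mlead_IpN_gens.
move=> k l k4 l4 kl; apply: coprime_wsubst_mnm_sum.
by case: k k4 kl => [|[|[|[|//]]]] _; case: l l4 => [|[|[|[|//]]]].
Qed.

End IpN.

Theorem mainTheorem9 (R : realType) (N : nat) : (3 <= N)%N ->
  regular_seq (IN_gens (complex R) N) /\ regular_seq (IpN_gens (complex R) N).
Proof.
by move=> N_ge3; split; [apply: regular_seq_IN_gens | apply: regular_seq_IpN_gens].
Qed.
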